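(* Let $n\ge 2$. If $M\in\mathcal{S}_n$ is a minimiser of $\lambda_{n-1}$ over $\mathcal{S}_n$, then the matrix obtained from $M$ by setting all of its diagonal entries to $0$ is also a minimiser of $\lambda_{n-1}$ over $\mathcal{S}_n$.
   Context: $\mathcal{S}_n$ is the set of $n\times n$ real symmetric matrices with all entries in $[0,1]$; $\lambda_k(M)$ is the $k$-th largest eigenvalue of $M$ counted with multiplicity. A minimiser of $\lambda_{n-1}$ over $\mathcal{S}_n$ is $M\in\mathcal{S}_n$ with $\lambda_{n-1}(M)\le\lambda_{n-1}(M')$ for all $M'\in\mathcal{S}_n$. *)

From HB Require Import structures.
From mathcomp Require Import all_boot all_order all_algebra.
From mathcomp Require Import boolp classical_sets reals.
Set Implicit Arguments. Unset Strict Implicit. Unset Printing Implicit Defensive.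
Import Order.TTheory GRing.Theory Num.Theory.
Local Open Scope ring_scope.

Definition in_Sn (R : realType) (n : nat) (M : 'M[R]_n) : Prop :=
  (forall i j, M i j = M j i) /\ (forall i j, 0 <= M i j <= 1).

(* For real symmetric
   matrices such a sequence exists (the characteristic polynomial splits
   over R); otherwise the default [::] is returned (never used here). *)
Definition eigen_seq (R : realType) (n : nat) (M : 'M[R]_n) : seq R :=
  xget [::] (fun s : seq R =>
    sorted (fun x y : R => y <= x) s /\ char_poly M = \prod_(x <- s) ('X - x%:P)).

(* lambda_k(M): the k-th largest eigenvalue (k is 1-indexed). *)
Definition lambdak (R : realType) (n : nat) (k : nat) (M : 'M[R]_n) : R :=
  nth 0 (eigen_seq M) k.-1.

Definition is_minimiser (R : realType) (n : nat) (M : 'M[R]_n) : Prop :=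
  in_Sn M /\ forall M' : 'M[R]_n, in_Sn M' -> lambdak (n.-1) M <= lambdak (n.-1) M'.

Definition zero_diag (R : realType) (n : nat) (M : 'M[R]_n) : 'M[R]_n :=
  \matrix_(i, j) (if i == j then 0 else M i j).

(* Let Z be M with its diagonal set to 0.  Then M - Z is the diagonal matrix
   of the nonnegative diagonal entries of M, so x^* Z x <= x^* M x for every
   complex vector x, and by Weyl's monotonicity principle every eigenvalue of Z
   is at most the corresponding eigenvalue of M.  As Z is again in S_n, it is
   a minimiser as well.  Monotonicity is proved by counting dimensions: if A
   had more eigenvalues >= t than B, the span of the corresponding
   eigenvectors of A would meet the span of the eigenvectors of B with
   eigenvalues < t in some x <> 0, and t |x|^2 <= x^* A x <= x^* B x < t |x|^2.
   MathComp's spectral theorem is for complex matrices, so real symmetric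
   matrices are diagonalised as hermitian matrices over R[i]. *)

From mathcomp Require Import all_boot all_order all_algebra.
From mathcomp Require Import boolp classical_sets reals.
From mathcomp Require Import complex.
Set Implicit Arguments. Unset Strict Implicit. Unset Printing Implicit Defensive.
Import Order.TTheory GRing.Theory Num.Theory.
Local Open Scope ring_scope.
Local Open Scope sesquilinear_scope.
Local Notation hform A x := ((x *m A *m x^t*) 0 0).

Section SortedCount.
Local Open Scope order_scope.

Lemma sorted_ge_nth_count d (T : orderType d) (x0 t : T) (s : seq T) i :
  sorted >=%O s -> (i < size s)%N -> (t <= nth x0 s i) = (i < count (>= t) s)%N.
Proof.
move=> s_sorted lt_is; have s_sorted_dual : sorted (<=%O : rel T^d) s by [].
apply/idP/idP => [le_t | /(@nth_count_le _ T^d t x0 s i s_sorted_dual)//].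
rewrite ltnNge; apply: contraL le_t => le_count; rewrite -ltNge.
by apply: (@nth_count_gt _ T^d t x0 s i s_sorted_dual); rewrite le_count.
Qed.

End SortedCount.

Lemma card_set_count (T : finType) (P : pred T) :
  #|[set x | P x]| = count P (enum T).
Proof. by rewrite cardsE cardE size_filter enumT. Qed.

Lemma eigen_seq_sorted_perm (R : realType) n (A : 'M[R]_n) (r : 'I_n -> R) :
  char_poly A = \prod_(j < n) ('X - (r j)%:P) ->
  sorted >=%O (eigen_seq A) /\ perm_eq (eigen_seq A) [seq r j | j <- enum 'I_n].
Proof.
move=> chA.
have chA_seq : char_poly A = \prod_(x <- [seq r j | j <- enum 'I_n]) ('X - x%:P).
  by rewrite big_map big_enum.
have sorted_root_seq : exists s : seq R, sorted >=%O s /\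
    char_poly A = \prod_(x <- s) ('X - x%:P).
  exists (sort >=%O [seq r j | j <- enum 'I_n]); split.
    by apply: sort_sorted => x y; exact: le_total.
  by rewrite chA_seq; apply: perm_big; rewrite perm_sym perm_sort.
have [sorted_eigen ch_eigen] := xgetPex [::] sorted_root_seq.
by split=> //; apply: prod_XsubC_eq; rewrite -ch_eigen -chA_seq.
Qed.

Lemma char_poly_similar (F : fieldType) n (P A : 'M[F]_n) :
  P \in unitmx -> char_poly (invmx P *m A *m P) = char_poly A.
Proof.
move=> P_unit; set Q := map_mx polyC (invmx P); set Pp := map_mx polyC P.
have QP : Q *m Pp = 1%:M by rewrite -map_mxM mulVmx // map_mx1.
have char_poly_mx_similar :
    char_poly_mx (invmx P *m A *m P) = Q *m char_poly_mx A *m Pp.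
  rewrite /char_poly_mx !map_mxM -/Q -/Pp mulmxBr mulmxBl.
  have QXP : Q *m 'X%:M *m Pp = 'X%:M by rewrite scalar_mxC -mulmxA QP mulmx1.
  by rewrite QXP.
by rewrite /char_poly char_poly_mx_similar !det_mulmx mulrAC -det_mulmx QP det1 mul1r.
Qed.

Lemma capmx_neq0 (F : fieldType) m1 m2 n (U : 'M[F]_(m1, n)) (V : 'M[F]_(m2, n)) :
  (n < \rank U + \rank V)%N -> (U :&: V)%MS != 0.
Proof.
rewrite -mxrank_eq0; apply: contraTneq => cap0.
by rewrite -leqNgt -mxrank_sum_cap cap0 addn0 rank_leq_col.
Qed.

Lemma sub_rowsub_support (F : fieldType) n (S : {set 'I_n}) (P : 'M[F]_n)
    (x : 'rV[F]_n) :
  (x <= rowsub (enum_val : 'I_#|S| -> 'I_n) P)%MS ->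
  exists2 c : 'rV[F]_n, x = c *m P & forall j, j \notin S -> c 0 j = 0.
Proof.
case/submxP => w ->; exists (w *m rowsub enum_val 1%:M).
  by rewrite rowsubE mulmxA.
move=> j jS; rewrite mxE big1 // => k _; rewrite !mxE.
case: eqP => [kj | _]; last by rewrite mulr0.
by move: (enum_valP k); rewrite kj (negbTE jS).
Qed.

Section HermitianForms.
Variable K : numClosedFieldType.

Lemma rowsub_unitarymx m n p (f : 'I_p -> 'I_m) (P : 'M[K]_(m, n)) :
  injective f -> P \is unitarymx -> rowsub f P \is unitarymx.
Proof.
move=> f_inj /row_unitarymxP P_orth; apply/row_unitarymxP => i j.
by rewrite !row_rowsub P_orth (inj_eq f_inj).
Qed.

Lemma mxrank_rowsub_enum_unitary n (S : {set 'I_n}) (P : 'M[K]_n) :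
  P \is unitarymx -> \rank (rowsub (enum_val : 'I_#|S| -> 'I_n) P) = #|S|.
Proof.
by move=> P_unitary; rewrite mxrank_unitary // rowsub_unitarymx //; exact: enum_val_inj.
Qed.

Lemma hform_unitary_diag n (P : 'M[K]_n) (d : 'I_n -> K) (c : 'rV[K]_n) :
  P \is unitarymx ->
  hform (P^t* *m diag_mx (\row_j d j) *m P) (c *m P) =
  \sum_j d j * (c 0 j * (c 0 j)^*).
Proof.
move=> P_unitary.
rewrite trmx_mul map_mxM !mulmxA -(mulmxA c P) (unitarymxP P_unitary) mulmx1.
rewrite -!mulmxA (mulmxA P) (unitarymxP P_unitary) mul1mx mulmxA mul_mx_diag mxE.
by apply: eq_bigr => j _; rewrite !mxE mulrCA mulrA.
Qed.

Lemma sqr_norm_unitary n (P : 'M[K]_n) (c : 'rV[K]_n) :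
  P \is unitarymx -> ((c *m P) *m (c *m P)^t*) 0 0 = \sum_j c 0 j * (c 0 j)^*.
Proof.
move=> P_unitary.
rewrite trmx_mul map_mxM !mulmxA -(mulmxA c P) (unitarymxP P_unitary) mulmx1 mxE.
by apply: eq_bigr => j _; rewrite !mxE.
Qed.

Lemma weighted_sqr_sum_ge n (d : 'I_n -> K) (t : K) (c : 'rV[K]_n) :
  (forall j, c 0 j != 0 -> t <= d j) ->
  t * \sum_j c 0 j * (c 0 j)^* <= \sum_j d j * (c 0 j * (c 0 j)^*).
Proof.
move=> le_td; rewrite mulr_sumr; apply: ler_sum => j _.
have [-> | /le_td le_tdj] := eqVneq (c 0 j) 0; first by rewrite !mul0r !mulr0.
by rewrite ler_wpM2r // mul_conjC_ge0.
Qed.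

Lemma weighted_sqr_sum_lt n (d : 'I_n -> K) (t : K) (c : 'rV[K]_n) :
  c != 0 -> (forall j, c 0 j != 0 -> d j < t) ->
  \sum_j d j * (c 0 j * (c 0 j)^*) < t * \sum_j c 0 j * (c 0 j)^*.
Proof.
move=> /rV0Pn[j cj_neq0] lt_dt; rewrite -subr_gt0 mulr_sumr -sumrB.
have term_ge0 k : 0 <= t * (c 0 k * (c 0 k)^*) - d k * (c 0 k * (c 0 k)^*).
  have [-> | /lt_dt/ltW le_dt] := eqVneq (c 0 k) 0.
    by rewrite !mul0r !mulr0 subrr.
  by rewrite -mulrBl mulr_ge0 ?subr_ge0 ?mul_conjC_ge0.
rewrite (bigD1 j) //= ltr_wpDr ?sumr_ge0 //.
by rewrite -mulrBl mulr_gt0 ?subr_gt0 ?lt_dt ?mul_conjC_gt0.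
Qed.

End HermitianForms.

Section RealSymmetric.
Variable R : realType.
Local Notation C := R[i].
Local Notation toC := (real_complex R).
Local Notation spectral P r := (P^t* *m diag_mx (\row_j toC (r j)) *m P).

Lemma real_sym_spectral n (A : 'M[R]_n) : A^T = A ->
  exists (P : 'M[C]_n) (r : 'I_n -> R), [/\ P \is unitarymx,
    map_mx toC A = spectral P r &
    char_poly A = \prod_(j < n) ('X - (r j)%:P)].
Proof.
move=> A_sym; set AC := map_mx toC A.
have AC_herm : AC \is hermsymmx.
  apply: realsym_hermsym.
    by apply/is_hermitianmxP; rewrite expr0 scale1r map_mx_id // map_trmx A_sym.
  by apply/mxOverP => i j; rewrite mxE complex_real.
have AC_spectral := orthomx_spectralP (hermitian_normalmx AC_herm).
have d_real := hermitian_spectral_diag_real AC_herm.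
set P := spectralmx AC in AC_spectral; set d := spectral_diag AC in AC_spectral d_real.
have P_unitary : P \is unitarymx by apply: spectral_unitarymx.
have dE : d = \row_j toC (complex.Re (d 0 j)).
  by apply/rowP => j; rewrite mxE RRe_real //; move/mxOverP: d_real; apply.
exists P, (fun j => complex.Re (d 0 j)); split=> //.
  by rewrite -invmx_unitary // -dE.
apply: (map_poly_inj toC).
rewrite map_char_poly -/AC AC_spectral char_poly_similar ?unitarymx_unit //.
rewrite char_poly_trig ?diag_mx_is_trig // rmorph_prod.
apply: eq_bigr => j _; rewrite mxE eqxx mulr1n rmorphB /= map_polyX map_polyC /=.
by rewrite {1}dE mxE.
Qed.

Lemma card_spectrum_ge_le n (PA PB : 'M[C]_n) (rA rB : 'I_n -> R) (t : R) :
  PA \is unitarymx -> PB \is unitarymx ->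
  (forall x : 'rV[C]_n, hform (spectral PA rA) x <= hform (spectral PB rB) x) ->
  (#|[set j | (t <= rA j)%R]| <= #|[set j | (t <= rB j)%R]|)%N.
Proof.
move=> PA_unitary PB_unitary le_AB.
set IA := [set j | t <= rA j]; set IB := [set j | t <= rB j].
set KB := [set j | rB j < t].
have card_IB_KB : (#|IB| + #|KB| = n)%N.
  have -> : KB = ~: IB by apply/setP => j; rewrite !inE ltNge.
  by rewrite cardsC card_ord.
rewrite leqNgt; apply/negP => lt_IB_IA.
set UA := rowsub (enum_val : 'I_#|IA| -> 'I_n) PA.
set UB := rowsub (enum_val : 'I_#|KB| -> 'I_n) PB.
have cap_neq0 : (UA :&: UB)%MS != 0.
  by apply: capmx_neq0; rewrite !mxrank_rowsub_enum_unitary // -{1}card_IB_KB ltn_add2r.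
have [x x_cap x_neq0] := rowV0Pn cap_neq0.
have [cA xA cA_supp] := sub_rowsub_support (submx_trans x_cap (capmxSl _ _)).
have [cB xB cB_supp] := sub_rowsub_support (submx_trans x_cap (capmxSr _ _)).
have cB_neq0 : cB != 0 by apply: contraNneq x_neq0 => cB0; rewrite xB cB0 mul0mx.
have ge_cA j : cA 0 j != 0 -> toC t <= toC (rA j).
  by rewrite lecR; apply: contraNT => ?; apply/eqP/cA_supp; rewrite inE.
have lt_cB j : cB 0 j != 0 -> toC (rB j) < toC t.
  by rewrite ltcR; apply: contraNT => ?; apply/eqP/cB_supp; rewrite inE.
have := le_AB x; rewrite [in X in X <= _]xA [in X in _ <= X]xB.
rewrite !hform_unitary_diag // => le_sums.
have := le_lt_trans (le_trans (weighted_sqr_sum_ge ge_cA) le_sums)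
  (weighted_sqr_sum_lt cB_neq0 lt_cB).
rewrite -(sqr_norm_unitary _ PA_unitary) -(sqr_norm_unitary _ PB_unitary).
by rewrite -xA -xB ltxx.
Qed.

Lemma lambdak_le n (A B : 'M[R]_n) k : A^T = A -> B^T = B ->
  (forall x : 'rV[C]_n, hform (map_mx toC A) x <= hform (map_mx toC B) x) ->
  (0 < k <= n)%N -> lambdak k A <= lambdak k B.
Proof.
move=> A_sym B_sym le_AB /andP[k_gt0 k_le_n].
have [PA [rA [PA_unitary AE chA]]] := real_sym_spectral A_sym.
have [PB [rB [PB_unitary BE chB]]] := real_sym_spectral B_sym.
have [sortedA permA] := eigen_seq_sorted_perm chA.
have [sortedB permB] := eigen_seq_sorted_perm chB.
have size_eigen s (r : 'I_n -> R) : perm_eq s [seq r j | j <- enum 'I_n] -> size s = n.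
  by move=> /perm_size->; rewrite size_map size_enum_ord.
have lt_k : (k.-1 < n)%N by rewrite prednK.
rewrite /lambdak (sorted_ge_nth_count _ _ sortedB) ?(size_eigen _ _ permB) //.
rewrite (permP permB) count_map -card_set_count.
apply: leq_trans (card_spectrum_ge_le (rA := rA) _ PA_unitary PB_unitary _).
  by rewrite card_set_count -count_map -(permP permA) -(sorted_ge_nth_count 0 _ sortedA)
    ?(size_eigen _ _ permA).
by rewrite -AE -BE.
Qed.

Lemma hform_zero_diag_le n (M : 'M[R]_n) (x : 'rV[C]_n) :
  (forall i, 0 <= M i i) ->
  hform (map_mx toC (zero_diag M)) x <= hform (map_mx toC M) x.
Proof.
move=> diag_ge0.
have -> : map_mx toC M = map_mx toC (zero_diag M) + diag_mx (\row_j toC (M j j)).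
  apply/matrixP => i j; rewrite !mxE.
  by case: eqP => [-> | _]; rewrite ?mulr1n ?add0r // mulr0n addr0.
rewrite mulmxDr mulmxDl [X in _ <= X]mxE lerDl mul_mx_diag mxE.
apply: sumr_ge0 => j _; rewrite !mxE mulrAC.
by rewrite mulr_ge0 ?mul_conjC_ge0 // ler0c.
Qed.

End RealSymmetric.

Lemma in_Sn_trmx (R : realType) n (M : 'M[R]_n) : in_Sn M -> M^T = M.
Proof. by case=> M_sym _; apply/matrixP => i j; rewrite mxE M_sym. Qed.

Lemma in_Sn_zero_diag (R : realType) n (M : 'M[R]_n) : in_Sn M -> in_Sn (zero_diag M).
Proof.
case=> M_sym M_bnd; split => i j; rewrite !mxE.
  by rewrite eq_sym; case: eqP => // ->.
by case: eqP => // _; rewrite lexx ler01.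
Qed.

Theorem lemma4p10 (R : realType) (n : nat) (M : 'M[R]_n) :
  (2 <= n)%N -> is_minimiser M -> is_minimiser (zero_diag M).
Proof.
move=> n_ge2 [M_Sn M_min]; have Z_Sn := in_Sn_zero_diag M_Sn.
split=> // M' M'_Sn; apply: le_trans (M_min M' M'_Sn).
apply: lambdak_le; rewrite ?in_Sn_trmx //.
- by move=> x; apply: hform_zero_diag_le => i; case: M_Sn => _ /(_ i i)/andP[].
- by rewrite -subn1 subn_gt0 n_ge2 leq_subr.
Qed.
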